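(* In the setting of the EM iteration $\mathbf p_{n+1}=T(\mathbf p_n)$ with $$T(\mathbf p)_j=(n+m)^{-1}\Big(\xi_j+\frac{p_j}{W(t_j)}\sum_{k\le j}\frac{\zeta_k}{\sum_{l\ge k}p_l/W(t_l)}\Big)$$ for maximizing $\mathcal L(\mathbf p)=\prod_{j=1}^h p_j^{\xi_j}\big(\sum_{k\ge j} p_k/W(t_k)\big)^{\zeta_j}$ over the probability simplex (where $0<t_1<\dots<t_h$, $W$ positive nondecreasing, $\xi_j,\zeta_j$ nonnegative integers with $\xi_j+\zeta_j\ge1$, $m=\sum\xi_j$, $n=\sum\zeta_j$), suppose the (unique) maximizer $\mathbf p^*$ of $\mathcal L$ over the simplex satisfies $p^*_j>0$ for all $j=1,\dots,h$. Then for any starting point $\mathbf p_0$ in the simplex with all coordinates positive, the iterates $\mathbf p_n$ converge to $\mathbf p^*$.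
   Context: $\xi_j,\zeta_j$ are the multiplicities of uncensored and censored observations at $t_j$; $\mathbf p$ gives the masses at $t_1,\dots,t_h$ of a discrete distribution. *)

From Stdlib Require Import Reals List.
Import ListNotations.
Open Scope R_scope.

(* Indices j = 1..h of the paper are shifted to 0..h-1 here. *)

Definition rsum (lo hi : nat) (f : nat -> R) : R :=
  fold_right Rplus 0 (map f (seq lo (hi - lo))).

Definition rprod (lo hi : nat) (f : nat -> R) : R :=
  fold_right Rmult 1 (map f (seq lo (hi - lo))).

Definition nsum (h : nat) (f : nat -> nat) : nat :=
  fold_right Nat.add 0%nat (map f (seq 0 h)).

Definition in_simplex (h : nat) (p : nat -> R) : Prop :=
  (forall j, (j < h)%nat -> 0 <= p j) /\ rsum 0 h p = 1.

Definition tailW (h : nat) (t : nat -> R) (W : R -> R) (p : nat -> R) (k : nat) : R :=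
  rsum k h (fun l => p l / W (t l)).

Definition lik (h : nat) (t : nat -> R) (W : R -> R) (xi zeta : nat -> nat)
  (p : nat -> R) : R :=
  rprod 0 h (fun j => p j ^ xi j * tailW h t W p j ^ zeta j).

Definition EM_T (h : nat) (t : nat -> R) (W : R -> R) (xi zeta : nat -> nat)
  (p : nat -> R) : nat -> R :=
  fun j => / INR (nsum h zeta + nsum h xi) *
    (INR (xi j) + p j / W (t j) *
       rsum 0 (S j) (fun k => INR (zeta k) / tailW h t W p k)).

(* Write a_j = 1 / W(t_j) > 0, S_k(p) = Σ_{l ≥ k} p_l a_l,
   R_j(p) = Σ_{k ≤ j} ζ_k / S_k(p) and N = m + n, so that the EM map reads
   T(p)_j = (ξ_j + p_j a_j R_j(p)) / N.

   1. T maps positive points to positive points of the simplex, thanks to the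
      exchange of sums Σ_j y_j a_j R_j(p) = Σ_k ζ_k S_k(y) / S_k(p)  [moment].
   2. The maximizer ps is interior, so moving from ps towards any point y of the
      simplex cannot increase log L; a second-order bound on ln turns this into the
      first-order condition [score_le], and summing it shows T(ps) = ps  [fixed_point].
   3. Lyapunov argument: Phi(p) = - Σ_j ps_j ln p_j decreases along the iteration by
      Σ_j ps_j ln(T(p)_j / p_j), which by Jensen's inequality for ln is at least
      D(p) = N⁻¹ Σ_j [ξ_j ln(ps_j / p_j) + ζ_j ln(S_j(ps) / S_j(p))].  As Phi ≥ 0 on
      the simplex, D(p_n) → 0.
   4. N·D(p) = Σ_j ξ_j φ(p_j / ps_j) + ζ_j φ(S_j(p) / S_j(ps)) with φ(x) = x - 1 - ln x
      ≥ (√x - 1)², so p_n,j → ps_j when ξ_j > 0 and S_j(p_n) → S_j(ps) when ζ_j > 0.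
   5. Since ξ_j + ζ_j ≥ 1 and p_j a_j = S_j - S_{j+1}, a backward induction from
      S_h = 0 gives the convergence of every coordinate. *)

From Stdlib Require Import Reals Lra Lia List.
Open Scope R_scope.

Lemma rsum_empty lo hi f : (hi <= lo)%nat -> rsum lo hi f = 0.
Proof. intros H. unfold rsum. replace (hi - lo)%nat with 0%nat by lia. reflexivity. Qed.

Lemma rsum_Sl lo hi f : (lo < hi)%nat -> rsum lo hi f = f lo + rsum (S lo) hi f.
Proof. intros H. unfold rsum. replace (hi - lo)%nat with (S (hi - S lo)) by lia. reflexivity. Qed.

Lemma rsum_Sr lo hi f : (lo <= hi)%nat -> rsum lo (S hi) f = rsum lo hi f + f hi.
Proof.
  intros H. unfold rsum. replace (S hi - lo)%nat with (S (hi - lo)) by lia.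
  rewrite seq_S, map_app, fold_right_app. simpl.
  replace (lo + (hi - lo))%nat with hi by lia.
  induction (map f (seq lo (hi - lo))) as [|x l IH]; simpl; lra.
Qed.

Lemma rsum_le lo hi f g :
  (forall k, (lo <= k < hi)%nat -> f k <= g k) -> rsum lo hi f <= rsum lo hi g.
Proof.
  intros H. unfold rsum.
  assert (Hin : forall k, In k (seq lo (hi - lo)) -> f k <= g k).
  { intros k Hk. apply in_seq in Hk. apply H. lia. }
  revert Hin. induction (seq lo (hi - lo)) as [|k l IH]; intros Hin; simpl; [lra|].
  pose proof (Hin k (or_introl eq_refl)).
  pose proof (IH (fun i Hi => Hin i (or_intror Hi))). lra.
Qed.

Lemma rsum_ext lo hi f g :
  (forall k, (lo <= k < hi)%nat -> f k = g k) -> rsum lo hi f = rsum lo hi g.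
Proof.
  intros H. apply Rle_antisym; apply rsum_le; intros k Hk; rewrite H by exact Hk; lra.
Qed.

Lemma rsum_plus lo hi f g : rsum lo hi (fun k => f k + g k) = rsum lo hi f + rsum lo hi g.
Proof. unfold rsum. induction (seq lo (hi - lo)) as [|k l IH]; simpl; lra. Qed.

Lemma rsum_scal lo hi c f : rsum lo hi (fun k => c * f k) = c * rsum lo hi f.
Proof. unfold rsum. induction (seq lo (hi - lo)) as [|k l IH]; simpl; [ring|rewrite IH; ring]. Qed.

Lemma rsum_minus lo hi f g : rsum lo hi (fun k => f k - g k) = rsum lo hi f - rsum lo hi g.
Proof.
  rewrite (rsum_ext lo hi _ (fun k => f k + (-1) * g k)) by (intros; ring).
  rewrite rsum_plus, rsum_scal. ring.
Qed.

Lemma rsum_nonneg lo hi f : (forall k, (lo <= k < hi)%nat -> 0 <= f k) -> 0 <= rsum lo hi f.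
Proof.
  intros H. replace 0 with (rsum lo hi (fun k => 0 * f k)) by (rewrite rsum_scal; ring).
  apply rsum_le. intros k Hk. specialize (H k Hk). lra.
Qed.

Lemma rsum_split lo mid hi f :
  (lo <= mid <= hi)%nat -> rsum lo hi f = rsum lo mid f + rsum mid hi f.
Proof.
  intros [H1 H2]. induction H2.
  - rewrite (rsum_empty mid mid) by lia. lra.
  - rewrite !rsum_Sr by lia. rewrite IHle. lra.
Qed.

Lemma rsum_pick lo hi k f :
  (lo <= k < hi)%nat -> rsum lo hi f = rsum lo k f + f k + rsum (S k) hi f.
Proof. intros Hk. rewrite (rsum_split lo k hi), (rsum_Sl k hi) by lia. ring. Qed.

Lemma rsum_term_le lo hi f k :
  (forall i, (lo <= i < hi)%nat -> 0 <= f i) -> (lo <= k < hi)%nat -> f k <= rsum lo hi f.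
Proof.
  intros H Hk. rewrite (rsum_pick lo hi k) by exact Hk.
  pose proof (rsum_nonneg lo k f (fun i Hi => H i ltac:(lia))).
  pose proof (rsum_nonneg (S k) hi f (fun i Hi => H i ltac:(lia))). lra.
Qed.

Lemma rsum_zero_terms lo hi f :
  (forall k, (lo <= k < hi)%nat -> 0 <= f k) -> rsum lo hi f = 0 ->
  forall k, (lo <= k < hi)%nat -> f k = 0.
Proof. intros H Hs k Hk. pose proof (rsum_term_le lo hi f k H Hk). pose proof (H k Hk). lra. Qed.

Lemma rsum_indicator lo hi k (F : nat -> R) :
  (lo <= k < hi)%nat ->
  rsum lo hi (fun j => (if Nat.eq_dec j k then 1 else 0) * F j) = F k.
Proof.
  intros Hk. rewrite (rsum_pick lo hi k) by exact Hk.
  rewrite (rsum_ext lo k _ (fun j => 0 * F j)), (rsum_ext (S k) hi _ (fun j => 0 * F j)).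
  - rewrite !rsum_scal. destruct (Nat.eq_dec k k); [ring | congruence].
  - intros j Hj. destruct (Nat.eq_dec j k); [lia | reflexivity].
  - intros j Hj. destruct (Nat.eq_dec j k); [lia | reflexivity].
Qed.

Lemma rsum_swap h y f :
  rsum 0 h (fun j => y j * rsum 0 (S j) f) = rsum 0 h (fun k => f k * rsum k h y).
Proof.
  induction h as [|h IH].
  - rewrite !rsum_empty; lia || lra.
  - rewrite !rsum_Sr, IH by lia.
    rewrite (rsum_ext 0 h (fun k => f k * rsum k (S h) y) (fun k => f k * rsum k h y + y h * f k))
      by (intros k Hk; rewrite rsum_Sr by lia; ring).
    rewrite rsum_plus, rsum_scal, (rsum_empty h h) by lia. ring.
Qed.

Lemma rprod_Sr lo hi f : (lo <= hi)%nat -> rprod lo (S hi) f = rprod lo hi f * f hi.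
Proof.
  intros H. unfold rprod. replace (S hi - lo)%nat with (S (hi - lo)) by lia.
  rewrite seq_S, map_app, fold_right_app. simpl.
  replace (lo + (hi - lo))%nat with hi by lia.
  induction (map f (seq lo (hi - lo))) as [|x l IH]; simpl; [ring | rewrite IH; ring].
Qed.

Lemma ln_rprod hi f : (forall k, (k < hi)%nat -> 0 < f k) ->
  0 < rprod 0 hi f /\ ln (rprod 0 hi f) = rsum 0 hi (fun k => ln (f k)).
Proof.
  induction hi as [|hi IH]; intros H.
  - unfold rprod, rsum. simpl. split; [lra | apply ln_1].
  - rewrite rprod_Sr, rsum_Sr by lia. destruct IH as [H1 H2]; [intros; apply H; lia|].
    assert (0 < f hi) by (apply H; lia).
    split; [nra | rewrite ln_mult, H2 by auto; reflexivity].
Qed.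

Lemma INR_nsum h f : INR (nsum h f) = rsum 0 h (fun j => INR (f j)).
Proof.
  induction h as [|h IH]; [reflexivity|].
  rewrite rsum_Sr, <- IH by lia. unfold nsum.
  rewrite seq_S, map_app, fold_right_app. simpl.
  assert (Hacc : forall l c, fold_right Nat.add c l = (fold_right Nat.add 0 l + c)%nat).
  { induction l as [|x l IHl]; intros c; simpl; [lia | rewrite (IHl c); lia]. }
  rewrite Hacc, Nat.add_0_r, plus_INR. lra.
Qed.

Lemma ln_le_sub1 x : 0 < x -> ln x <= x - 1.
Proof. intros Hx. pose proof (exp_ineq1_le (ln x)) as H. rewrite exp_ln in H by exact Hx. lra. Qed.

Lemma ln_div x y : 0 < x -> 0 < y -> ln (x / y) = ln x - ln y.
Proof.
  intros Hx Hy. unfold Rdiv.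
  rewrite ln_mult, ln_Rinv by (try apply Rinv_0_lt_compat; assumption). ring.
Qed.

Lemma ln_tangent v z M : 0 <= v -> 0 < z -> 0 < M -> v * ln z <= v * ln M + v * (z / M) - v.
Proof.
  intros Hv Hz HM. assert (HzM : 0 < z / M) by (apply Rdiv_lt_0_compat; assumption).
  pose proof (ln_le_sub1 _ HzM) as H. rewrite ln_div in H by assumption.
  assert (v * (ln z - ln M) <= v * (z / M - 1)) by (apply Rmult_le_compat_l; assumption). lra.
Qed.

(* Jensen's inequality for [ln], for a weighted family made of one distinguished
   point [x] (weight [c]) and the points [y k] (weights [w k]), lo ≤ k < hi. *)
Lemma ln_jensen lo hi c x w y :
  0 <= c -> 0 < x -> (forall k, (lo <= k < hi)%nat -> 0 <= w k /\ 0 < y k) ->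
  c + rsum lo hi w = 1 ->
  0 < c * x + rsum lo hi (fun k => w k * y k) ->
  c * ln x + rsum lo hi (fun k => w k * ln (y k))
    <= ln (c * x + rsum lo hi (fun k => w k * y k)).
Proof.
  intros Hc Hx Hwy Hw HM. set (M := c * x + rsum lo hi (fun k => w k * y k)) in *.
  assert (Hterms : rsum lo hi (fun k => w k * ln (y k))
          <= rsum lo hi (fun k => w k * ln M + / M * (w k * y k) - w k)).
  { apply rsum_le. intros k Hk. destruct (Hwy k Hk) as [Hwk Hyk].
    pose proof (ln_tangent (w k) (y k) M Hwk Hyk HM). unfold Rdiv in *. lra. }
  rewrite rsum_minus, rsum_plus, rsum_scal in Hterms.
  rewrite (rsum_ext lo hi (fun k => w k * ln M) (fun k => ln M * w k)) in Hterms by (intros; ring).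
  rewrite rsum_scal in Hterms.
  pose proof (ln_tangent c x M Hc Hx HM) as Hx'.
  assert (Hsum : c * (x / M) + / M * rsum lo hi (fun k => w k * y k) = 1)
    by (unfold M in *; field; lra).
  replace (rsum lo hi w) with (1 - c) in Hterms by lra. nra.
Qed.

Lemma ln_lower e x : 0 < e <= /2 -> -1 <= x -> e * x - 2 * (e * e) * (x * x) <= ln (1 + e * x).
Proof.
  intros He Hx. assert (Hex : 0 <= e * (x + 1)) by (apply Rmult_le_pos; lra).
  assert (Hy : /2 <= 1 + e * x) by lra.
  pose proof (ln_le_sub1 (/ (1 + e * x)) (Rinv_0_lt_compat (1 + e * x) ltac:(lra))) as H.
  rewrite ln_Rinv in H by lra.
  assert (E : / (1 + e * x) = 1 - e * x + (e * x) * (e * x) / (1 + e * x)) by (field; lra).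
  assert ((e * x) * (e * x) / (1 + e * x) <= 2 * (e * e) * (x * x)).
  { apply (Rmult_le_reg_r (1 + e * x)); [lra|].
    unfold Rdiv. rewrite Rmult_assoc, Rinv_l by lra. nra. }
  lra.
Qed.

(* A quantity bounded above by [2 e C] for every small [e > 0] is nonpositive:
   this turns a first-order expansion of a maximum into a sign condition. *)
Lemma le0_of_quadratic_bound B C : 0 <= C ->
  (forall e, 0 < e <= /2 -> e * B - 2 * (e * e) * C <= 0) -> B <= 0.
Proof.
  intros HC H. destruct (Rle_or_lt B 0) as [|HB]; [assumption | exfalso].
  set (e := Rmin (/2) (B / (4 * (C + 1)))).
  assert (He : 0 < e <= /2).
  { split; [apply Rmin_glb_lt; [lra | apply Rdiv_lt_0_compat; lra] | apply Rmin_l]. }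
  assert (Hle : e <= B / (4 * (C + 1))) by apply Rmin_r.
  apply (Rmult_le_compat_r (4 * (C + 1))) in Hle; [|lra].
  replace (B / (4 * (C + 1)) * (4 * (C + 1))) with B in Hle by (field; lra).
  specialize (H e He). nra.
Qed.

(* φ(x) = x - 1 - ln x, the pointwise Kullback-Leibler integrand. *)
Definition phi x := x - 1 - ln x.

Lemma phi_sqrt x : 0 < x -> (sqrt x - 1) * (sqrt x - 1) <= phi x.
Proof.
  intros Hx. pose proof (sqrt_lt_R0 x Hx) as Hs. pose proof (sqrt_sqrt x (Rlt_le _ _ Hx)) as E.
  pose proof (ln_le_sub1 _ Hs) as H. unfold phi.
  replace (ln x) with (ln (sqrt x * sqrt x)) by (rewrite E; reflexivity).
  rewrite ln_mult by exact Hs. nra.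
Qed.

Lemma phi_nonneg x : 0 < x -> 0 <= phi x.
Proof. intros Hx. pose proof (phi_sqrt x Hx). pose proof (Rle_0_sqr (sqrt x - 1)). unfold Rsqr in *. lra. Qed.

Lemma cv_const c : Un_cv (fun _ => c) c.
Proof. intros e He. exists 0%nat. intros. unfold Rdist. rewrite Rminus_diag, Rabs_R0. lra. Qed.

Lemma cv_ext (u v : nat -> R) l : (forall n, u n = v n) -> Un_cv u l -> Un_cv v l.
Proof. intros E H e He. destruct (H e He) as [N HN]. exists N. intros. rewrite <- E. auto. Qed.

Lemma cv_scal (u : nat -> R) l c : Un_cv u l -> Un_cv (fun n => c * u n) (c * l).
Proof. intros H. apply CV_mult; [apply cv_const | exact H]. Qed.

Lemma cv_squeeze0 (u v : nat -> R) : (forall n, 0 <= u n <= v n) -> Un_cv v 0 -> Un_cv u 0.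
Proof.
  intros H Hv e He. destruct (Hv e He) as [N HN]. exists N. intros n Hn. specialize (HN n Hn).
  specialize (H n). unfold Rdist in *. rewrite Rminus_0_r in *.
  rewrite Rabs_right in HN by lra. rewrite Rabs_right by lra. lra.
Qed.

Lemma cv_of_sq_dist (u : nat -> R) : Un_cv (fun n => (u n - 1) * (u n - 1)) 0 -> Un_cv u 1.
Proof.
  intros H e He. destruct (H (e * e)) as [N HN]; [nra|]. exists N. intros n Hn.
  specialize (HN n Hn). unfold Rdist in *. rewrite Rminus_0_r in HN.
  pose proof (Rle_0_sqr (u n - 1)) as Hsq. unfold Rsqr in Hsq.
  rewrite Rabs_right in HN by lra.
  destruct (Rlt_or_le (Rabs (u n - 1)) e) as [|Hge]; [assumption|].
  assert (Hsq' : e * e <= Rabs (u n - 1) * Rabs (u n - 1))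
    by (apply Rmult_le_compat; lra).
  rewrite <- Rabs_mult, Rabs_right in Hsq' by lra. lra.
Qed.

Lemma cv_gaps_of_potential (F d : nat -> R) : (forall n, 0 <= F n) -> (forall n, 0 <= d n) ->
  (forall n, F (S n) <= F n - d n) -> Un_cv d 0.
Proof.
  intros HF Hd Hg.
  assert (Hdec : Un_decreasing F) by (intro n; specialize (Hg n); specialize (Hd n); lra).
  assert (Hlb : has_lb F) by (exists 0; intros x [n Hn]; unfold opp_seq in Hn; specialize (HF n); lra).
  destruct (decreasing_cv F Hdec Hlb) as [L HL].
  apply (cv_squeeze0 d (fun n => F n - F (S n))).
  - intros n. specialize (Hg n). specialize (Hd n). lra.
  - replace 0 with (L - L) by lra. apply CV_minus; [exact HL|].
    intros e He. destruct (HL e He) as [N HN]. exists N. intros. apply HN. lia.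
Qed.

Lemma cv_of_phi_bound (y d : nat -> R) c w : 0 < c -> 0 < w -> (forall n, 0 < y n) ->
  (forall n, w * phi (y n / c) <= d n) -> Un_cv d 0 -> Un_cv y c.
Proof.
  intros Hc Hw Hy Hb Hd.
  set (u := fun n => sqrt (y n / c)).
  assert (Hu : Un_cv u 1).
  { apply cv_of_sq_dist, (cv_squeeze0 _ (fun n => / w * d n)).
    - intros n. assert (Hyc : 0 < y n / c) by (apply Rdiv_lt_0_compat; auto).
      pose proof (phi_sqrt _ Hyc) as Hphi. specialize (Hb n).
      pose proof (Rle_0_sqr (sqrt (y n / c) - 1)) as Hsq. unfold Rsqr in Hsq.
      unfold u. split; [exact Hsq|].
      apply (Rmult_le_reg_l w); [exact Hw|].
      replace (w * (/ w * d n)) with (d n) by (field; lra).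
      assert (w * ((sqrt (y n / c) - 1) * (sqrt (y n / c) - 1)) <= w * phi (y n / c))
        by (apply Rmult_le_compat_l; lra).
      lra.
    - replace 0 with (/ w * 0) by ring. apply cv_scal, Hd. }
  apply (cv_ext (fun n => c * (u n * u n))).
  - intros n. unfold u. rewrite sqrt_sqrt; [field; lra|].
    apply Rlt_le, Rdiv_lt_0_compat; auto.
  - pose proof (cv_scal _ _ c (CV_mult _ _ _ _ Hu Hu)) as Hlim.
    replace (c * (1 * 1)) with c in Hlim by ring. exact Hlim.
Qed.

(** The EM map. Throughout, [a j = 1 / W (t j)]. *)

Section EMMap.
Variables (h : nat) (a : nat -> R) (xi zeta : nat -> nat).
Hypothesis h_pos : (0 < h)%nat.
Hypothesis a_pos : forall j, (j < h)%nat -> 0 < a j.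
Hypothesis obs_pos : forall j, (j < h)%nat -> (1 <= xi j + zeta j)%nat.

Definition X j := INR (xi j).
Definition Z j := INR (zeta j).
Definition tail (p : nat -> R) k := rsum k h (fun l => p l * a l).
Definition cens (p : nat -> R) j := rsum 0 (S j) (fun k => Z k / tail p k).
Definition Ntot := INR (nsum h zeta + nsum h xi).
Definition T (p : nat -> R) j := / Ntot * (X j + p j * a j * cens p j).
Definition positive (p : nat -> R) := forall j, (j < h)%nat -> 0 < p j.

Lemma X_nonneg j : 0 <= X j. Proof. apply pos_INR. Qed.
Lemma Z_nonneg j : 0 <= Z j. Proof. apply pos_INR. Qed.

Lemma Ntot_eq : Ntot = rsum 0 h X + rsum 0 h Z.
Proof. unfold Ntot. rewrite plus_INR, !INR_nsum. unfold X, Z. lra. Qed.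

Lemma obs_weight j : (j < h)%nat -> 1 <= X j + Z j.
Proof. intros Hj. unfold X, Z. rewrite <- plus_INR. apply (le_INR 1), obs_pos, Hj. Qed.

Lemma Ntot_pos : 0 < Ntot.
Proof.
  rewrite Ntot_eq, <- rsum_plus.
  pose proof (rsum_term_le 0 h (fun k => X k + Z k) 0%nat) as Hterm.
  assert (Hnn : forall k, (0 <= k < h)%nat -> 0 <= X k + Z k)
    by (intros k _; pose proof (X_nonneg k); pose proof (Z_nonneg k); lra).
  pose proof (obs_weight 0 h_pos). specialize (Hterm Hnn ltac:(lia)). lra.
Qed.

Lemma tail_Sl p k : (k < h)%nat -> tail p k = p k * a k + tail p (S k).
Proof. intros Hk. apply rsum_Sl, Hk. Qed.

Lemma tail_end p : tail p h = 0.
Proof. apply rsum_empty. lia. Qed.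

Lemma tail_nonneg y k : (forall j, (j < h)%nat -> 0 <= y j) -> 0 <= tail y k.
Proof.
  intros Hy. apply rsum_nonneg. intros l Hl.
  pose proof (Hy l ltac:(lia)). pose proof (a_pos l ltac:(lia)). nra.
Qed.

Lemma tail_pos p k : positive p -> (k < h)%nat -> 0 < tail p k.
Proof.
  intros Hp Hk. rewrite tail_Sl by exact Hk.
  pose proof (tail_nonneg p (S k) (fun j Hj => Rlt_le _ _ (Hp j Hj))).
  pose proof (Hp k Hk). pose proof (a_pos k Hk). nra.
Qed.

Lemma tail_lin p q c d k : tail (fun j => c * p j + d * q j) k = c * tail p k + d * tail q k.
Proof. unfold tail. rewrite <- !rsum_scal, <- rsum_plus. apply rsum_ext. intros. ring. Qed.

Lemma moment p y :
  rsum 0 h (fun j => y j * a j * cens p j) = rsum 0 h (fun k => Z k * (tail y k / tail p k)).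
Proof.
  unfold cens. rewrite (rsum_swap h (fun j => y j * a j) (fun k => Z k / tail p k)).
  apply rsum_ext. intros k Hk. unfold tail, Rdiv. ring.
Qed.

Lemma cens_nonneg p j : positive p -> 0 <= cens p j.
Proof.
  intros Hp. apply rsum_nonneg. intros k Hk. destruct (Nat.lt_ge_cases k h) as [Hkh | Hhk].
  - pose proof (tail_pos p k Hp Hkh). pose proof (Z_nonneg k).
    apply Rmult_le_pos; [lra | apply Rlt_le, Rinv_0_lt_compat; lra].
  - unfold tail. rewrite rsum_empty by exact Hhk. unfold Rdiv. rewrite Rinv_0. lra.
Qed.

(* An uncensored observation at [t_j] gives [ξ_j > 0]; a censored one gives
   [ζ_j / S_j(p) > 0] inside [R_j(p)]. Either way [T p j > 0]. *)
Lemma T_pos p : positive p -> positive (T p).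
Proof.
  intros Hp j Hj. unfold T. apply Rmult_lt_0_compat; [apply Rinv_0_lt_compat, Ntot_pos|].
  pose proof (cens_nonneg p j Hp). pose proof (Hp j Hj). pose proof (a_pos j Hj).
  pose proof (X_nonneg j). pose proof (obs_weight j Hj).
  destruct (Rlt_or_le 0 (X j)) as [HX | HX].
  - assert (0 <= p j * a j * cens p j) by (apply Rmult_le_pos; nra). lra.
  - assert (Hterm : Z j / tail p j <= cens p j).
    { apply (rsum_term_le 0 (S j) (fun k => Z k / tail p k) j); [|lia].
      intros k Hk. pose proof (tail_pos p k Hp ltac:(lia)). pose proof (Z_nonneg k).
      apply Rmult_le_pos; [lra | apply Rlt_le, Rinv_0_lt_compat; lra]. }
    pose proof (tail_pos p j Hp Hj).
    assert (0 < Z j / tail p j) by (apply Rdiv_lt_0_compat; lra).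
    assert (0 < p j * a j * cens p j) by (apply Rmult_lt_0_compat; nra). lra.
Qed.

(* T maps positive points to the simplex: by [moment], Σ_j p_j a_j R_j(p) = n. *)
Lemma T_sum p : positive p -> rsum 0 h (T p) = 1.
Proof.
  intros Hp. unfold T. rewrite rsum_scal, rsum_plus, moment.
  rewrite (rsum_ext 0 h (fun k => Z k * (tail p k / tail p k)) Z).
  - rewrite <- Ntot_eq. pose proof Ntot_pos. field. lra.
  - intros k Hk. pose proof (tail_pos p k Hp ltac:(lia)). field. lra.
Qed.

Lemma T_simplex p : positive p -> in_simplex h (T p).
Proof. intros Hp. split; [intros j Hj; apply Rlt_le, T_pos; assumption | apply T_sum, Hp]. Qed.

(** First-order optimality of the maximizer [ps]. *)

Variable ps : nat -> R.
Hypothesis ps_simplex : in_simplex h ps.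
Hypothesis ps_pos : positive ps.
Hypothesis ps_max : forall q, in_simplex h q ->
  rprod 0 h (fun j => q j ^ xi j * tail q j ^ zeta j)
  <= rprod 0 h (fun j => ps j ^ xi j * tail ps j ^ zeta j).

Definition loglik p := rsum 0 h (fun j => X j * ln (p j) + Z j * ln (tail p j)).

(* On positive points the likelihood is [exp ∘ loglik], so [ps] also maximizes [loglik]. *)
Lemma loglik_max q : in_simplex h q -> positive q -> loglik q <= loglik ps.
Proof.
  intros Hq Hqp.
  assert (Hln : forall p, positive p ->
    0 < rprod 0 h (fun j => p j ^ xi j * tail p j ^ zeta j) /\
    ln (rprod 0 h (fun j => p j ^ xi j * tail p j ^ zeta j)) = loglik p).
  { intros p Hp. destruct (ln_rprod h (fun j => p j ^ xi j * tail p j ^ zeta j)) as [H1 H2].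
    - intros k Hk. apply Rmult_lt_0_compat; apply pow_lt; [apply Hp | apply tail_pos]; auto.
    - split; [exact H1|]. rewrite H2. apply rsum_ext. intros k Hk.
      pose proof (Hp k ltac:(lia)). pose proof (tail_pos p k Hp ltac:(lia)).
      rewrite ln_mult by (apply pow_lt; assumption). rewrite !ln_pow by assumption. reflexivity. }
  destruct (Hln q Hqp) as [A1 A2]. destruct (Hln ps ps_pos) as [B1 B2].
  rewrite <- A2, <- B2. destruct (Rle_lt_or_eq_dec _ _ (ps_max q Hq)) as [Hlt | Heq].
  - apply Rlt_le, ln_increasing; assumption.
  - rewrite Heq. lra.
Qed.

(* The score of a point [y]: the derivative at [e = 0] of
   [loglik ((1 - e) ps + e y)] equals [score y - N]. *)
Definition score y := rsum 0 h (fun j => X j * (y j / ps j) + Z j * (tail y j / tail ps j)).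

(* Moving from [ps] towards [y] by a fraction [e] cannot increase [loglik];
   combined with the second-order bound [ln_lower] this controls the score. *)
Lemma loglik_perturbation y e :
  (forall j, (j < h)%nat -> 0 <= y j) -> rsum 0 h y = 1 -> 0 < e <= /2 ->
  rsum 0 h (fun j =>
    X j * (e * (y j / ps j - 1) - 2 * (e * e) * ((y j / ps j - 1) * (y j / ps j - 1))) +
    Z j * (e * (tail y j / tail ps j - 1)
           - 2 * (e * e) * ((tail y j / tail ps j - 1) * (tail y j / tail ps j - 1)))) <= 0.
Proof.
  intros Hy Hsum He. destruct ps_simplex as [_ Hps1].
  set (q := fun j => (1 - e) * ps j + e * y j).
  assert (Hqp : positive q).
  { intros j Hj. unfold q. pose proof (ps_pos j Hj). pose proof (Hy j Hj). nra. }
  assert (Hqs : in_simplex h q).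
  { split; [intros j Hj; apply Rlt_le, Hqp, Hj|].
    unfold q. rewrite rsum_plus, !rsum_scal, Hps1, Hsum. ring. }
  pose proof (loglik_max q Hqs Hqp) as Hmax. unfold loglik in Hmax.
  assert (Hgap : rsum 0 h (fun j => (X j * ln (q j) + Z j * ln (tail q j))
                                   - (X j * ln (ps j) + Z j * ln (tail ps j))) <= 0)
    by (rewrite rsum_minus; lra).
  eapply Rle_trans; [|exact Hgap]. apply rsum_le. intros j Hj.
  pose proof (ps_pos j ltac:(lia)). pose proof (Hqp j ltac:(lia)).
  pose proof (tail_pos ps j ps_pos ltac:(lia)). pose proof (tail_pos q j Hqp ltac:(lia)).
  assert (Eq : q j / ps j = 1 + e * (y j / ps j - 1)) by (unfold q; field; lra).
  assert (Et : tail q j / tail ps j = 1 + e * (tail y j / tail ps j - 1)).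
  { unfold q. rewrite tail_lin. field. lra. }
  assert (Hv : -1 <= y j / ps j - 1).
  { pose proof (Hy j ltac:(lia)). assert (0 <= y j / ps j) by (apply Rmult_le_pos; [lra | apply Rlt_le, Rinv_0_lt_compat; lra]). lra. }
  assert (Hu : -1 <= tail y j / tail ps j - 1).
  { pose proof (tail_nonneg y j Hy).
    assert (0 <= tail y j / tail ps j) by (apply Rmult_le_pos; [lra | apply Rlt_le, Rinv_0_lt_compat; lra]). lra. }
  pose proof (ln_lower e _ He Hv) as Lv. pose proof (ln_lower e _ He Hu) as Lu.
  rewrite <- Eq, ln_div in Lv by assumption. rewrite <- Et, ln_div in Lu by assumption.
  pose proof (X_nonneg j). pose proof (Z_nonneg j).
  apply (Rmult_le_compat_l (X j)) in Lv; [|assumption].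
  apply (Rmult_le_compat_l (Z j)) in Lu; [|assumption]. lra.
Qed.

Lemma score_le y : (forall j, (j < h)%nat -> 0 <= y j) -> rsum 0 h y = 1 -> score y <= Ntot.
Proof.
  intros Hy Hsum.
  set (v := fun j => y j / ps j - 1). set (u := fun j => tail y j / tail ps j - 1).
  set (B := rsum 0 h (fun j => X j * v j + Z j * u j)).
  set (C := rsum 0 h (fun j => X j * (v j * v j) + Z j * (u j * u j))).
  assert (HB : B = score y - Ntot).
  { unfold B, v, u, score. rewrite Ntot_eq, <- rsum_plus, <- rsum_minus.
    apply rsum_ext. intros. ring. }
  assert (HC : 0 <= C).
  { apply rsum_nonneg. intros j Hj. pose proof (X_nonneg j). pose proof (Z_nonneg j).
    pose proof (Rle_0_sqr (v j)). pose proof (Rle_0_sqr (u j)). unfold Rsqr in *.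
    apply Rplus_le_le_0_compat; apply Rmult_le_pos; assumption. }
  enough (B <= 0) by lra.
  apply (le0_of_quadratic_bound B C HC). intros e He.
  eapply Rle_trans; [|exact (loglik_perturbation y e Hy Hsum He)].
  unfold B, C. rewrite <- !rsum_scal, <- rsum_minus. apply Req_le, rsum_ext.
  intros. unfold v, u. ring.
Qed.

Lemma score_split y : score y = rsum 0 h (fun j => y j * (X j / ps j + a j * cens ps j)).
Proof.
  unfold score. rewrite rsum_plus, <- moment, <- rsum_plus.
  apply rsum_ext. intros. unfold Rdiv. ring.
Qed.

Lemma fixed_point k : (k < h)%nat -> X k + ps k * a k * cens ps k = Ntot * ps k.
Proof.
  set (g := fun i => Ntot * ps i - (X i + ps i * a i * cens ps i)).
  assert (Hg : forall i, (0 <= i < h)%nat -> 0 <= g i).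
  { intros i Hi. set (ei := fun j => if Nat.eq_dec j i then 1 else 0).
    assert (Hei : forall F, rsum 0 h (fun j => ei j * F j) = F i)
      by (intros F; apply rsum_indicator; lia).
    assert (Hle := score_le ei).
    rewrite score_split, Hei in Hle.
    rewrite (rsum_ext 0 h ei (fun j => ei j * 1)), Hei in Hle by (intros; ring).
    specialize (Hle ltac:(intros j _; unfold ei; destruct (Nat.eq_dec j i); lra) eq_refl).
    pose proof (ps_pos i ltac:(lia)). unfold g.
    apply (Rmult_le_compat_l (ps i)) in Hle; [|lra].
    replace (ps i * (X i / ps i + a i * cens ps i)) with (X i + ps i * a i * cens ps i)
      in Hle by (field; lra). lra. }
  assert (Hsum : rsum 0 h g = 0).
  { unfold g. rewrite rsum_minus, rsum_scal, rsum_plus, moment.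
    destruct ps_simplex as [_ ->].
    rewrite (rsum_ext 0 h (fun k => Z k * (tail ps k / tail ps k)) Z), Ntot_eq; [ring|].
    intros i Hi. pose proof (tail_pos ps i ps_pos ltac:(lia)). field. lra. }
  intros Hk. pose proof (rsum_zero_terms 0 h g Hg Hsum k ltac:(lia)). unfold g in *. lra.
Qed.

Lemma score_eq y : score y = Ntot * rsum 0 h y.
Proof.
  rewrite score_split, <- rsum_scal. apply rsum_ext. intros j Hj.
  pose proof (fixed_point j ltac:(lia)). pose proof (ps_pos j ltac:(lia)).
  replace (X j / ps j + a j * cens ps j) with (Ntot * ps j / ps j)
    by (rewrite <- H; field; lra).
  field. lra.
Qed.

(** The Lyapunov function [Phi] and the divergence [D]. *)

Definition Phi p := - rsum 0 h (fun j => ps j * ln (p j)).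
Definition divergence p :=
  / Ntot * rsum 0 h (fun j => X j * ln (ps j / p j) + Z j * ln (tail ps j / tail p j)).

(* Jensen's inequality applied to the fixed-point form of the EM ratio:
   T(p)_j / p_j = c x + Σ_{k ≤ j} w_k y_k with c = ξ_j / (N ps_j), x = ps_j / p_j,
   w_k = a_j ζ_k / (N S_k(ps)), y_k = S_k(ps) / S_k(p), and c + Σ w_k = 1 by [fixed_point]. *)
Lemma log_ratio_lower p j : positive p -> (j < h)%nat ->
  X j / Ntot * ln (ps j / p j)
  + ps j * a j * rsum 0 (S j) (fun k => Z k / (Ntot * tail ps k) * ln (tail ps k / tail p k))
  <= ps j * ln (T p j / p j).
Proof.
  intros Hp Hj.
  pose proof (Hp j Hj). pose proof (ps_pos j Hj). pose proof (a_pos j Hj). pose proof Ntot_pos.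
  set (c := X j / (Ntot * ps j)).
  set (w := fun k => a j / Ntot * (Z k / tail ps k)).
  set (y := fun k => tail ps k / tail p k).
  assert (Hc : 0 <= c).
  { pose proof (X_nonneg j). apply Rmult_le_pos; [lra | apply Rlt_le, Rinv_0_lt_compat; nra]. }
  assert (Hwy : forall k, (0 <= k < S j)%nat -> 0 <= w k /\ 0 < y k).
  { intros k Hk. pose proof (tail_pos ps k ps_pos ltac:(lia)).
    pose proof (tail_pos p k Hp ltac:(lia)). pose proof (Z_nonneg k). unfold w, y. split.
    - apply Rmult_le_pos; apply Rmult_le_pos; try apply Rlt_le, Rinv_0_lt_compat; lra.
    - apply Rdiv_lt_0_compat; assumption. }
  assert (Hweights : c + rsum 0 (S j) w = 1).
  { unfold w. rewrite rsum_scal. fold (cens ps j). pose proof (fixed_point j Hj).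
    unfold c. field_simplify_eq; [nra | lra]. }
  assert (Hmix : c * (ps j / p j) + rsum 0 (S j) (fun k => w k * y k) = T p j / p j).
  { rewrite (rsum_ext 0 (S j) _ (fun k => a j / Ntot * (Z k / tail p k))).
    - rewrite rsum_scal. unfold c, T, cens. field. lra.
    - intros k Hk. pose proof (tail_pos ps k ps_pos ltac:(lia)).
      pose proof (tail_pos p k Hp ltac:(lia)). unfold w, y. field. lra. }
  assert (HM : 0 < T p j / p j) by (apply Rdiv_lt_0_compat; [apply T_pos|]; assumption).
  rewrite <- Hmix in HM |- *.
  pose proof (ln_jensen 0 (S j) c (ps j / p j) w y Hc ltac:(apply Rdiv_lt_0_compat; lra)
                Hwy Hweights HM) as J.
  apply (Rmult_le_compat_l (ps j)) in J; [|lra].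
  eapply Rle_trans; [|exact J]. apply Req_le.
  rewrite Rmult_plus_distr_l. f_equal; [unfold c; field; lra|].
  rewrite <- (rsum_scal 0 (S j) (ps j * a j)), <- (rsum_scal 0 (S j) (ps j)).
  apply rsum_ext. intros k Hk. pose proof (tail_pos ps k ps_pos ltac:(lia)).
  unfold w, y. field. lra.
Qed.

Lemma Phi_step p : positive p -> Phi (T p) = Phi p - rsum 0 h (fun j => ps j * ln (T p j / p j)).
Proof.
  intros Hp. unfold Phi.
  rewrite (rsum_ext 0 h (fun j => ps j * ln (T p j / p j))
                       (fun j => ps j * ln (T p j) - ps j * ln (p j))).
  - rewrite rsum_minus. ring.
  - intros j Hj. pose proof (T_pos p Hp j ltac:(lia)). pose proof (Hp j ltac:(lia)).
    rewrite ln_div by assumption. ring.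
Qed.

(* This decrease is at least the divergence: sum [log_ratio_lower] over [j]
   and exchange the order of summation. *)
Lemma divergence_le_step p : positive p ->
  divergence p <= rsum 0 h (fun j => ps j * ln (T p j / p j)).
Proof.
  intros Hp.
  eapply Rle_trans; [|apply rsum_le; intros j Hj; apply log_ratio_lower; [exact Hp | lia]].
  rewrite rsum_plus, rsum_swap.
  unfold divergence. rewrite rsum_plus, Rmult_plus_distr_l, <- !rsum_scal. apply Req_le. f_equal.
  - apply rsum_ext. intros. unfold Rdiv. ring.
  - apply rsum_ext. intros k Hk. pose proof (tail_pos ps k ps_pos ltac:(lia)).
    fold (tail ps k). pose proof Ntot_pos. field. lra.
Qed.

Lemma Phi_nonneg p : in_simplex h p -> positive p -> 0 <= Phi p.
Proof.
  intros [Hn Hs] Hp. unfold Phi.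
  enough (rsum 0 h (fun j => ps j * ln (p j)) <= rsum 0 h (fun j => 0 * ps j))
    by (rewrite rsum_scal in *; lra).
  apply rsum_le. intros j Hj.
  assert (p j <= 1) by (rewrite <- Hs; apply (rsum_term_le 0 h p j); [intros; apply Hn; lia | lia]).
  pose proof (ln_le_sub1 (p j) (Hp j ltac:(lia))). pose proof (ps_pos j ltac:(lia)).
  assert (ps j * ln (p j) <= ps j * 0) by (apply Rmult_le_compat_l; lra). lra.
Qed.

(* On the simplex, [N · D(p)] is a sum of nonnegative divergence terms, by [score_eq]. *)
Lemma divergence_decomp p : in_simplex h p -> positive p ->
  Ntot * divergence p
  = rsum 0 h (fun j => X j * phi (p j / ps j) + Z j * phi (tail p j / tail ps j)).
Proof.
  intros [_ Hs] Hp.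
  rewrite (rsum_ext 0 h _ (fun j =>
      (X j * (p j / ps j) + Z j * (tail p j / tail ps j)) - (X j + Z j)
      + (X j * ln (ps j / p j) + Z j * ln (tail ps j / tail p j)))).
  - rewrite rsum_plus, rsum_minus. fold (score p). rewrite score_eq, Hs, rsum_plus, <- Ntot_eq.
    unfold divergence. pose proof Ntot_pos. field. lra.
  - intros j Hj. pose proof (Hp j ltac:(lia)). pose proof (ps_pos j ltac:(lia)).
    pose proof (tail_pos p j Hp ltac:(lia)). pose proof (tail_pos ps j ps_pos ltac:(lia)).
    unfold phi. rewrite !ln_div by assumption. ring.
Qed.

Lemma divergence_terms p j : in_simplex h p -> positive p -> (j < h)%nat ->
  X j * phi (p j / ps j) <= Ntot * divergence p /\
  Z j * phi (tail p j / tail ps j) <= Ntot * divergence p.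
Proof.
  intros Hs Hp Hj. rewrite divergence_decomp by assumption.
  assert (Hnn : forall k, (0 <= k < h)%nat ->
            0 <= X k * phi (p k / ps k) /\ 0 <= Z k * phi (tail p k / tail ps k)).
  { intros k Hk. pose proof (Hp k ltac:(lia)). pose proof (ps_pos k ltac:(lia)).
    pose proof (tail_pos p k Hp ltac:(lia)). pose proof (tail_pos ps k ps_pos ltac:(lia)).
    split; apply Rmult_le_pos; try apply X_nonneg; try apply Z_nonneg;
      apply phi_nonneg, Rdiv_lt_0_compat; assumption. }
  pose proof (rsum_term_le 0 h (fun k => X k * phi (p k / ps k) + Z k * phi (tail p k / tail ps k)) j
    (fun k Hk => Rplus_le_le_0_compat _ _ (proj1 (Hnn k Hk)) (proj2 (Hnn k Hk))) ltac:(lia)).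
  destruct (Hnn j ltac:(lia)). simpl in *. split; lra.
Qed.

Variable p0 : nat -> R.
Hypothesis p0_simplex : in_simplex h p0.
Hypothesis p0_pos : positive p0.

Definition iterate n := Nat.iter n T p0.

Lemma iterate_inv n : in_simplex h (iterate n) /\ positive (iterate n).
Proof.
  induction n as [|n [_ Hp]]; [split; assumption|].
  split; [apply T_simplex, Hp | apply T_pos, Hp].
Qed.

Lemma divergence_nonneg p : in_simplex h p -> positive p -> 0 <= divergence p.
Proof.
  intros Hs Hp. pose proof Ntot_pos.
  enough (0 <= Ntot * divergence p) by nra.
  rewrite divergence_decomp by assumption. apply rsum_nonneg. intros k Hk.
  pose proof (Hp k ltac:(lia)). pose proof (ps_pos k ltac:(lia)).
  pose proof (tail_pos p k Hp ltac:(lia)). pose proof (tail_pos ps k ps_pos ltac:(lia)).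
  apply Rplus_le_le_0_compat; apply Rmult_le_pos; try apply X_nonneg; try apply Z_nonneg;
    apply phi_nonneg, Rdiv_lt_0_compat; assumption.
Qed.

(* [Phi] is a nonnegative potential decreasing by at least [D] at each step. *)
Lemma divergence_cv : Un_cv (fun n => Ntot * divergence (iterate n)) 0.
Proof.
  rewrite <- (Rmult_0_r Ntot). apply cv_scal.
  apply (cv_gaps_of_potential (fun n => Phi (iterate n))); intros n;
    destruct (iterate_inv n) as [Hs Hp].
  - apply Phi_nonneg; assumption.
  - apply divergence_nonneg; assumption.
  - change (iterate (S n)) with (T (iterate n)).
    rewrite Phi_step by exact Hp. pose proof (divergence_le_step _ Hp). lra.
Qed.

Lemma cv_coord j : (j < h)%nat -> 0 < X j -> Un_cv (fun n => iterate n j) (ps j).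
Proof.
  intros Hj HX. apply (cv_of_phi_bound _ (fun n => Ntot * divergence (iterate n)) _ (X j) (ps_pos j Hj) HX);
    [| |exact divergence_cv].
  - intros n. apply (proj2 (iterate_inv n)), Hj.
  - intros n. destruct (iterate_inv n) as [Hs Hp]. apply (divergence_terms _ j Hs Hp Hj).
Qed.

Lemma cv_tail j : (j < h)%nat -> 0 < Z j -> Un_cv (fun n => tail (iterate n) j) (tail ps j).
Proof.
  intros Hj HZ.
  apply (cv_of_phi_bound _ (fun n => Ntot * divergence (iterate n)) _ (Z j)
           (tail_pos ps j ps_pos Hj) HZ); [| |exact divergence_cv].
  - intros n. apply tail_pos; [apply (proj2 (iterate_inv n)) | exact Hj].
  - intros n. destruct (iterate_inv n) as [Hs Hp]. apply (divergence_terms _ j Hs Hp Hj).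
Qed.

(* Backward step: [S_k = p_k a_k + S_{k+1}] and [ξ_k + ζ_k ≥ 1], so convergence of
   [S_{k+1}] propagates to both [p_k] and [S_k]. *)
Lemma cv_step k : (k < h)%nat ->
  Un_cv (fun n => tail (iterate n) (S k)) (tail ps (S k)) ->
  Un_cv (fun n => iterate n k) (ps k) /\ Un_cv (fun n => tail (iterate n) k) (tail ps k).
Proof.
  intros Hk Hnext. pose proof (a_pos k Hk).
  destruct (Rlt_le_dec 0 (X k)) as [HX | HX].
  - pose proof (cv_coord k Hk HX) as Hc. split; [exact Hc|].
    rewrite (tail_Sl ps k Hk).
    apply (cv_ext (fun n => iterate n k * a k + tail (iterate n) (S k)));
      [intros n; symmetry; apply tail_Sl, Hk|].
    apply CV_plus; [apply CV_mult; [exact Hc | apply cv_const] | exact Hnext].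
  - pose proof (obs_weight k Hk). pose proof (X_nonneg k).
    pose proof (cv_tail k Hk ltac:(lra)) as Hc. split; [|exact Hc].
    replace (ps k) with (/ a k * (tail ps k - tail ps (S k)))
      by (rewrite (tail_Sl ps k Hk); field; lra).
    apply (cv_ext (fun n => / a k * (tail (iterate n) k - tail (iterate n) (S k)))).
    + intros n. rewrite (tail_Sl _ k Hk). field. lra.
    + apply cv_scal, CV_minus; assumption.
Qed.

Lemma cv_suffix d : (d <= h)%nat ->
  Un_cv (fun n => tail (iterate n) (h - d)) (tail ps (h - d)) /\
  forall j, (h - d <= j < h)%nat -> Un_cv (fun n => iterate n j) (ps j).
Proof.
  induction d as [|d IH]; intros Hd.
  - rewrite Nat.sub_0_r, tail_end. split; [|intros; lia].
    apply (cv_ext (fun _ => 0)); [intros; symmetry; apply tail_end | apply cv_const].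
  - destruct IH as [IHtail IHcoord]; [lia|].
    replace (h - d)%nat with (S (h - S d)) in IHtail, IHcoord by lia.
    destruct (cv_step (h - S d) ltac:(lia) IHtail) as [Hcoord Htail].
    split; [exact Htail|].
    intros j Hj. destruct (Nat.eq_dec j (h - S d)) as [-> | Hne]; [exact Hcoord|].
    apply IHcoord. lia.
Qed.

Lemma iterate_cv j : (j < h)%nat -> Un_cv (fun n => iterate n j) (ps j).
Proof. intros Hj. apply (proj2 (cv_suffix h (le_n h))). lia. Qed.

End EMMap.

Theorem mainTheorem3
  (h : nat) (t : nat -> R) (W : R -> R) (xi zeta : nat -> nat)
  (ht0 : (0 < h)%nat -> 0 < t 0%nat)
  (ht_incr : forall j, (S j < h)%nat -> t j < t (S j))
  (hW_pos : forall x, 0 < x -> 0 < W x)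
  (hW_mono : forall x y, 0 < x -> x <= y -> W x <= W y)
  (hxz : forall j, (j < h)%nat -> (1 <= xi j + zeta j)%nat)
  (pstar : nat -> R)
  (hstar_simplex : in_simplex h pstar)
  (hstar_max : forall q, in_simplex h q -> lik h t W xi zeta q <= lik h t W xi zeta pstar)
  (hstar_pos : forall j, (j < h)%nat -> 0 < pstar j)
  (p0 : nat -> R)
  (hp0_simplex : in_simplex h p0)
  (hp0_pos : forall j, (j < h)%nat -> 0 < p0 j) :
  forall j, (j < h)%nat ->
    Un_cv (fun N => Nat.iter N (EM_T h t W xi zeta) p0 j) (pstar j).
Proof.
  intros j Hj.
  assert (h_pos : (0 < h)%nat) by lia.
  assert (t_pos : forall k, (k < h)%nat -> 0 < t k).
  { induction k as [|k IH]; intros Hk; [exact (ht0 h_pos)|].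
    pose proof (ht_incr k Hk). pose proof (IH ltac:(lia)). lra. }
  assert (a_pos : forall k, (k < h)%nat -> 0 < / W (t k))
    by (intros k Hk; apply Rinv_0_lt_compat, hW_pos, t_pos, Hk).
  exact (iterate_cv h (fun l => / W (t l)) xi zeta h_pos a_pos hxz pstar hstar_simplex
           hstar_pos hstar_max p0 hp0_simplex hp0_pos j Hj).
Qed.
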